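(* Let $f\in\mathbb{R}[X_1,\dots,X_n]$ be a non-constant polynomial of degree $2d$ such that $|\alpha|<2d$ for each $\alpha\in\Delta$ and $f_{2d,i}>0$ for $i=1,\dots,n$. Let $$k\ \ge\ \max_{i=1,\dots,n} C\Big(t^{2d}-\frac{1}{2d}\sum_{\alpha\in\Delta}\alpha_i|f_{\alpha}|f_{2d,i}^{-\frac{|\alpha|}{2d}}t^{|\alpha|}\Big)$$ and $$r_L:=f_0-\frac{1}{2d}\sum_{\alpha\in\Delta}(2d-|\alpha|)|f_{\alpha}|k^{|\alpha|}(f_{2d}^{-\alpha})^{\frac{1}{2d}}.$$ Then $f_{gp}\ge r_L$.
   Context: $\mathbb{N}=\{0,1,2,\dots\}$. For $\alpha\in\mathbb{N}^n$ write $\underline{X}^\alpha=X_1^{\alpha_1}\cdots X_n^{\alpha_n}$, $|\alpha|=\sum_i\alpha_i$, and for $a\in\mathbb{R}^n$, $a^{\alpha}=\prod_i a_i^{\alpha_i}$ with $0^0=1$. For $f=\sum_\alpha f_\alpha\underline{X}^\alpha$ of degree $2d$: $f_0$ constant term, $f_{2d,i}$ coefficient of $X_i^{2d}$, $f_{2d}^{-\alpha}:=\prod_{i=1}^n f_{2d,i}^{-\alpha_i}$, $\Omega=\{\alpha: f_\alpha\ne0\}\setminus\{\underline{0},2d\epsilon_1,\dots,2d\epsilon_n\}$, $\Delta=\{\alpha\in\Omega:\ f_\alpha<0\text{ or }\alpha_i\text{ odd for some }i\}$, $\Delta^{<2d}=\{\alpha\in\Delta:|\alpha|<2d\}$. $f_{gp}$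 is the supremum (with $\sup\emptyset=-\infty$) of all $r\in\mathbb{R}$ for which there exist reals $a_{\alpha,i}\ge0$ ($\alpha\in\Delta$, $i=1,\dots,n$), $a_{\alpha,i}=0$ iff $\alpha_i=0$, with, for $a_\alpha=(a_{\alpha,1},\dots,a_{\alpha,n})$: (1) $(2d)^{2d}a_\alpha^\alpha=|f_\alpha|^{2d}\alpha^\alpha$ for $\alpha\in\Delta$, $|\alpha|=2d$; (2) $f_{2d,i}\ge\sum_{\alpha\in\Delta}a_{\alpha,i}$ for all $i$; (3) $f_0-r\ge\sum_{\alpha\in\Delta^{<2d}}(2d-|\alpha|)\big[\frac{|f_\alpha|^{2d}\alpha^\alpha}{(2d)^{2d}a_\alpha^\alpha}\big]^{1/(2d-|\alpha|)}$. For a univariate polynomial $p(t)=t^N-\sum_{j=0}^{N-1}c_jt^j$ with all $c_j\ge0$ and at least one $c_j\neq0$, $C(p)$ denotes the unique positive root of $p$; by convention $C(t^N):=0$. *)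

From mathcomp Require Import all_boot all_order all_algebra.
From mathcomp Require Import mpoly.
From mathcomp Require Import all_classical all_reals all_analysis.
Set Implicit Arguments. Unset Strict Implicit. Unset Printing Implicit Defensive.
Import Order.TTheory GRing.Theory Num.Theory.
Local Open Scope ring_scope.


Section GP.
Context {R : realType} {n : nat}.
Implicit Types (f : mpoly.mpoly n R) (a : mpoly.multinom n) (d : nat).

Definition mabs a : nat := mpoly.mdeg a.

Definition fcoef f a : R := mpoly.mcoeff a f.
Definition fconst f : R := mpoly.mcoeff mpoly.mnm0 f.
Definition e2d d (i : 'I_n) : mpoly.multinom n := mpoly.mnm_muln (mpoly.mnm1 i) (2 * d).
Definition flead f d (i : 'I_n) : R := mpoly.mcoeff (e2d d i) f.

Definition inOmega f d a : bool :=
  [&& a \in mpoly.msupp f, a != mpoly.mnm0 & [forall i, a != e2d d i]].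

Definition inDelta f d a : bool :=
  inOmega f d a && ((fcoef f a < 0) || [exists i, odd (a i)]).

Definition Delta f d : seq (mpoly.multinom n) := seq.filter (inDelta f d) (mpoly.msupp f).

(* x^alpha = prod_i x_i^alpha_i  (nat powers, so 0^0 = 1) *)
Definition monpow (x : 'I_n -> R) a : R := \prod_(i < n) x i ^+ a i.

Definition selfpow a : R := monpow (fun i => (a i)%:R) a.

Definition gp_feasible f d (r : R) : Prop :=
  exists A : mpoly.multinom n -> 'I_n -> R,
    (forall a, a \in Delta f d -> forall i,
        0 <= A a i /\ (A a i = 0 <-> a i = 0%N)) /\
    (* (1) *)
    (forall a, a \in Delta f d -> mabs a = (2 * d)%N ->
        (2 * d)%:R ^+ (2 * d) * monpow (A a) a
        = `|fcoef f a| ^+ (2 * d) * selfpow a) /\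
    (* (2) *)
    (forall i, \sum_(a <- Delta f d) A a i <= flead f d i) /\
    (* (3) *)
    (\sum_(a <- Delta f d | (mabs a < 2 * d)%N)
        ((2 * d - mabs a)%N)%:R *
        powR ((`|fcoef f a| ^+ (2 * d) * selfpow a)
                / ((2 * d)%:R ^+ (2 * d) * monpow (A a) a))
             (((2 * d - mabs a)%N)%:R)^-1
      <= fconst f - r).

(* f_gp = sup of feasible r, in the extended reals (sup emptyset = -oo) *)
Definition f_gp f d : \bar R := ereal_sup [set (r%:E)%E | r in gp_feasible f d].

(* C(p): the unique positive root of p (0 if p has no positive root,
   which covers the convention C(t^N) = 0). *)
Definition Croot (p : {poly R}) : R := xget 0 [set t | 0 < t /\ root p t].

Definition Cpoly f d (i : 'I_n) : {poly R} :=
  'X^(2 * d) -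
  \sum_(a <- Delta f d)
     (((2 * d)%:R)^-1 * (a i)%:R * `|fcoef f a|
        * powR (flead f d i) (- ((mabs a)%:R / (2 * d)%:R))) *: 'X^(mabs a).

Definition leadinvpow f d a : R := \prod_(i < n) flead f d i ^- a i.

Definition rL f d (k : R) : R :=
  fconst f - ((2 * d)%:R)^-1 *
    \sum_(a <- Delta f d)
       ((2 * d - mabs a)%N)%:R * `|fcoef f a| * k ^+ mabs a
         * powR (leadinvpow f d a) ((2 * d)%:R)^-1.

End GP.

From mathcomp Require Import all_boot all_order all_algebra.
From mathcomp Require Import mpoly.
From mathcomp Require Import all_classical all_reals all_analysis.
From mathcomp Require Import polyrcf.
From mathcomp Require Import ring.
Import Order.TTheory GRing.Theory Num.Theory.
Local Open Scope ring_scope.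

(* The witness a_{alpha,i} is chosen so that each term of (3) equals the
   corresponding term of r_L; then (3) holds with equality, and
   sum_alpha a_{alpha,i} = f_{2d,i} k^{-2d} sum_alpha c_{i,alpha} k^|alpha|, where
   t^{2d} - sum_alpha c_{i,alpha} t^|alpha| is the polynomial defining C.  That
   polynomial has one sign change, so it is nonnegative beyond its positive
   root; hence k >= C gives (2). *)

Lemma Croot_ge0 {R : realType} (p : {poly R}) : 0 <= Croot p.
Proof. by rewrite /Croot; case: xgetP => [x _ [/ltW]|]. Qed.

Section LacunaryPolynomial.
Context {R : realType} {T : eqType} {s : seq T} {c : T -> R} {e : T -> nat} {N : nat}.
Hypothesis c_ge0 : forall x, x \in s -> 0 <= c x.
Hypothesis e_range : forall x, x \in s -> (0 < e x < N)%N.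

Let p : {poly R} := 'X^N - \sum_(x <- s) c x *: 'X^(e x).
(* [p.[t] = t^N (1 - h t)] with [h] nonincreasing on [0 < t]: [p] changes sign once. *)
Let h (t : R) := \sum_(x <- s) c x / t ^+ (N - e x).

Let horner_lacunary t : 0 < t -> p.[t] = t ^+ N * (1 - h t).
Proof.
move=> t_gt0; rewrite /p hornerD hornerN horner_sum hornerXn mulrBr mulr1.
congr (_ - _); rewrite /h mulr_sumr !big_seq; apply: eq_bigr => x xs.
have /andP [_ /ltnW eN] := e_range x xs.
rewrite hornerZ hornerXn -{1}(subnK eN) exprD; field.
by rewrite expf_neq0 // gt_eqF.
Qed.

Let h_nonincreasing t u : 0 < t -> t <= u -> h u <= h t.
Proof.
move=> t_gt0 tu; rewrite /h !big_seq; apply: ler_sum => x xs.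
apply: ler_wpM2l; first exact: c_ge0.
rewrite lef_pV2 ?posrE ?exprn_gt0 ?(lt_le_trans t_gt0) //.
by rewrite lerXn2r // nnegrE ltW // (lt_le_trans t_gt0).
Qed.

Let h_small x t : x \in s -> 0 < t <= 1 -> c x / t <= h t.
Proof.
move=> xs /andP [t_gt0 t_le1]; rewrite /h (big_rem x) //= -[_ / t]addr0.
apply: lerD; last first.
  rewrite big_seq sumr_ge0 // => y /mem_rem ys.
  by rewrite divr_ge0 ?c_ge0 ?exprn_ge0 ?ltW.
apply: ler_wpM2l; first exact: c_ge0.
have /andP [_ eN] := e_range x xs.
rewrite lef_pV2 ?posrE ?exprn_gt0 // -{2}(expr1 t).
by apply: ler_wiXn2l; rewrite ?subn_gt0 // ltW.
Qed.

Let h_large t : 1 <= t -> h t <= (\sum_(x <- s) c x) / t.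
Proof.
move=> t_ge1; have t_gt0 := lt_le_trans ltr01 t_ge1.
rewrite /h mulr_suml !big_seq; apply: ler_sum => x xs.
apply: ler_wpM2l; first exact: c_ge0.
have /andP [_ eN] := e_range x xs.
by rewrite lef_pV2 ?posrE ?exprn_gt0 // ler_eXnr // subn_gt0.
Qed.

Lemma lacunary_has_pos_root :
  (exists2 x, x \in s & 0 < c x) -> exists t, 0 < t /\ root p t.
Proof.
case=> x0 x0s cx0_gt0.
pose t0 := Num.min 1 (c x0 / 2); pose M := 1 + \sum_(x <- s) c x.
have t0_gt0 : 0 < t0 by rewrite lt_min ltr01 divr_gt0.
have t0_le1 : t0 <= 1 by rewrite ge_min lexx.
have M_ge1 : 1 <= M by rewrite lerDl big_seq sumr_ge0.
have M_gt0 : 0 < M := lt_le_trans ltr01 M_ge1.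
have p_t0 : p.[t0] <= 0.
  rewrite horner_lacunary // pmulr_rle0 ?exprn_gt0 // subr_le0.
  apply: le_trans (h_small _ _ x0s (_ : 0 < t0 <= 1)); last by rewrite t0_gt0.
  rewrite ler_pdivlMr // mul1r ge_min; apply/orP; right.
  by rewrite ler_pdivrMr // ler_peMr ?ltW // ltr1n.
have p_M : 0 <= p.[M].
  rewrite horner_lacunary // pmulr_rge0 ?exprn_gt0 // subr_ge0.
  apply: le_trans (h_large _ M_ge1) _.
  by rewrite ler_pdivrMr // mul1r lerDr.
have [t /andP [t0t _] pt] := poly_ivt (le_trans t0_le1 M_ge1) (introT andP (conj p_t0 p_M)).
by exists t; split; first exact: lt_le_trans t0t.
Qed.

Lemma lacunary_Croot_gt0 : (exists2 x, x \in s & 0 < c x) -> 0 < Croot p.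
Proof. by move=> /lacunary_has_pos_root /(xgetPex 0) []. Qed.

Lemma lacunary_sum_le_Croot k :
  Croot p <= k -> \sum_(x <- s) c x * k ^+ e x <= k ^+ N.
Proof.
move=> Ck; have k_ge0 := le_trans (Croot_ge0 p) Ck.
have [/hasP [x xs cx_gt0]|c0] := boolP (has (fun x => 0 < c x) s).
  have [C_gt0 C_root] : 0 < Croot p /\ root p (Croot p).
    by apply: (xgetPex 0 (lacunary_has_pos_root _)); exists x.
  have h_C : h (Croot p) = 1.
    move: C_root; rewrite /root horner_lacunary // mulf_eq0 expf_eq0.
    by rewrite (gt_eqF C_gt0) andbF subr_eq0 => /eqP <-.
  have k_gt0 := lt_le_trans C_gt0 Ck.
  have : 0 <= p.[k].
    rewrite horner_lacunary // pmulr_rge0 ?exprn_gt0 //.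
    by rewrite subr_ge0 -h_C h_nonincreasing.
  rewrite /p hornerD hornerN horner_sum hornerXn subr_ge0.
  by under eq_bigr do rewrite hornerZ hornerXn.
rewrite big_seq big1 ?exprn_ge0 // => x xs.
have : ~~ (0 < c x) by apply: contra c0 => cx; apply/hasP; exists x.
by rewrite lt_def c_ge0 // andbT negbK => /eqP ->; rewrite mul0r.
Qed.
End LacunaryPolynomial.

Lemma powR_exprnK {R : realType} (x : R) (j : nat) :
  (0 < j)%N -> 0 <= x -> (x ^+ j) `^ (j%:R)^-1 = x.
Proof.
move=> j_gt0 x_ge0; rewrite -powR_mulrn // -powRrM mulfV ?powRr1 //.
by rewrite pnatr_eq0 -lt0n.
Qed.

Lemma powR_inv {R : realType} (x r : R) : 0 <= x -> x^-1 `^ r = (x `^ r)^-1.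
Proof. by move=> x_ge0; rewrite -powR_inv1 // -powRrM mulN1r powRN. Qed.

Lemma powR_prod {R : realType} {I : Type} (s : seq I) (F : I -> R) (r : R) :
  (forall i, 0 <= F i) -> (\prod_(i <- s) F i) `^ r = \prod_(i <- s) F i `^ r.
Proof.
move=> F_ge0; elim: s => [|i s IHs]; first by rewrite !big_nil powR1.
by rewrite !big_cons powRM ?IHs // prodr_ge0.
Qed.

Section Monomials.
Context {R : realType} {n : nat} (a : mpoly.multinom n).

Lemma monpowM (F G : 'I_n -> R) :
  monpow (fun i => F i * G i) a = monpow F a * monpow G a.
Proof. by rewrite /monpow -big_split; apply: eq_bigr => i _; rewrite exprMn. Qed.

Lemma monpow_cst (x : R) : monpow (fun=> x) a = x ^+ mabs a.
Proof. by rewrite /monpow prodrXr -mdegE. Qed.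

Lemma monpow_powR (F : 'I_n -> R) (r : R) :
  (forall i, 0 <= F i) -> monpow (fun i => F i `^ r) a = monpow F a `^ r.
Proof.
move=> F_ge0; rewrite /monpow powR_prod => [|i]; last exact: exprn_ge0.
by apply: eq_bigr => i _; rewrite -!powR_mulrn ?powR_ge0 // powRAC.
Qed.

Lemma monpow_gt0 (F : 'I_n -> R) : (forall i, 0 < F i) -> 0 < monpow F a.
Proof. by move=> F_gt0; apply: prodr_gt0 => i _; rewrite exprn_gt0. Qed.

Lemma selfpow_gt0 : 0 < selfpow (R := R) a.
Proof.
apply: prodr_gt0 => i _; have [->|ai_gt0] := posnP (a i); first by rewrite expr0.
by rewrite exprn_gt0 // ltr0n.
Qed.

End Monomials.

Lemma mem_Delta {R : realType} {n d : nat} {f : mpoly.mpoly n R} {a} :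
  a \in Delta f d -> fcoef f a != 0 /\ (0 < mabs a)%N.
Proof.
rewrite /Delta mem_filter => /andP [/andP [/and3P [a_supp a_neq0 _] _] _].
by rewrite /fcoef -mcoeff_msupp lt0n /mabs mdeg_eq0.
Qed.

Section GeometricProgramBound.
Variables (R : realType) (n d : nat) (f : mpoly.mpoly n R).
Hypothesis d_gt0 : (0 < d)%N.
Hypothesis flead_gt0 : forall i, 0 < flead f d i.
Hypothesis Delta_mabs_lt : forall a, a \in Delta f d -> (mabs a < 2 * d)%N.

Let D : R := (2 * d)%:R.
Let D_gt0 : 0 < D. Proof. by rewrite ltr0n muln_gt0. Qed.

(* [Cpoly f d i] is by definition ['X^(2 * d) - \sum_(a <- Delta f d) Ccoef i a *: 'X^(mabs a)]. *)
Definition Ccoef (i : 'I_n) (a : mpoly.multinom n) : R :=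
  D^-1 * (a i)%:R * `|fcoef f a| * flead f d i `^ (- ((mabs a)%:R / D)).

Lemma Ccoef_ge0 i a : 0 <= Ccoef i a.
Proof. by rewrite /Ccoef /D !mulr_ge0 ?powR_ge0 ?invr_ge0. Qed.

Lemma Ccoef_gt0 i a : a \in Delta f d -> (0 < a i)%N -> 0 < Ccoef i a.
Proof.
move=> /mem_Delta [fa_neq0 _] ai_gt0.
by rewrite /Ccoef !mulr_gt0 ?powR_gt0 ?invr_gt0 ?D_gt0 ?normr_gt0 ?ltr0n.
Qed.

Variable k : R.
Hypothesis Croot_le_k : forall i, Croot (Cpoly f d i) <= k.

Lemma sum_Ccoef_le i : \sum_(a <- Delta f d) Ccoef i a * k ^+ mabs a <= k ^+ (2 * d).
Proof.
apply: (lacunary_sum_le_Croot _ _ _ (Croot_le_k i)).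
  by move=> a _; exact: Ccoef_ge0.
by move=> a aD; rewrite Delta_mabs_lt // andbT; case: (mem_Delta aD).
Qed.

Lemma Delta_k_gt0 {a} : a \in Delta f d -> 0 < k.
Proof.
move=> aD; have [_ mabs_gt0] := mem_Delta aD.
have /existsP [i ai_gt0] : [exists i, 0 < a i]%N.
  move: mabs_gt0; apply: contraTT; rewrite negb_exists => /forallP a0.
  by rewrite /mabs mdegE big1 // => i _; apply/eqP; rewrite -leqn0 leqNgt a0.
apply: lt_le_trans (Croot_le_k i); apply: lacunary_Croot_gt0 => [b _|b bD|].
- exact: Ccoef_ge0.
- by rewrite Delta_mabs_lt // andbT; case: (mem_Delta bD).
- by exists a => //; exact: Ccoef_gt0.
Qed.

(* The choice of a_{alpha,i} that makes the alpha-term of (3) equal to the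
   alpha-term of r_L. *)
Definition gp_witness (a : mpoly.multinom n) (i : 'I_n) : R :=
  (a i)%:R * (`|fcoef f a| / (D * k ^+ (2 * d - mabs a)))
  * flead f d i `^ ((2 * d - mabs a)%N%:R / D).

Lemma gp_witness_ge0 a i : a \in Delta f d -> 0 <= gp_witness a i.
Proof.
move=> /Delta_k_gt0 k_gt0.
by rewrite /gp_witness mulr_ge0 ?powR_ge0 // mulr_ge0 ?divr_ge0 // mulr_ge0 ?exprn_ge0 ?ltW.
Qed.

Lemma gp_witness_eq0 a i : a \in Delta f d -> gp_witness a i = 0 <-> a i = 0%N.
Proof.
move=> aD; have k_gt0 := Delta_k_gt0 aD; have [fa_neq0 _] := mem_Delta aD.
split=> [|ai0]; last by rewrite /gp_witness ai0 !mul0r.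
rewrite /gp_witness -mulrA => /eqP; rewrite mulf_eq0 pnatr_eq0 => /orP [/eqP //|].
by rewrite gt_eqF // mulr_gt0 ?powR_gt0 // divr_gt0 ?normr_gt0 // mulr_gt0 ?exprn_gt0.
Qed.

Lemma gp_witnessE a i : a \in Delta f d ->
  gp_witness a i = flead f d i / k ^+ (2 * d) * (Ccoef i a * k ^+ mabs a).
Proof.
move=> aD; have k_gt0 := Delta_k_gt0 aD; have mabs_le := ltnW (Delta_mabs_lt _ aD).
rewrite /gp_witness /Ccoef.
have -> : (2 * d - mabs a)%N%:R / D = - ((mabs a)%:R / D) + 1.
  by rewrite natrB // -/D mulrBl mulfV ?gt_eqF // addrC.
rewrite powRD ?(gt_eqF (flead_gt0 i)) ?implybT // powRr1 ?ltW //.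
rewrite -{2}(subnK mabs_le) exprD.
by field; rewrite pnatr_eq0 -lt0n d_gt0 !expf_neq0 ?gt_eqF.
Qed.

Lemma sum_gp_witness_le i : \sum_(a <- Delta f d) gp_witness a i <= flead f d i.
Proof.
case Delta_eq: (Delta f d) => [|a0 s]; first by rewrite big_nil ltW.
rewrite -Delta_eq; have k_gt0 : 0 < k by apply: (@Delta_k_gt0 a0); rewrite Delta_eq mem_head.
rewrite big_seq (eq_bigr _ (fun a aD => gp_witnessE a i aD)) -big_seq -mulr_sumr.
by rewrite mulrAC ler_pdivrMr ?exprn_gt0 // ler_pM2l ?sum_Ccoef_le.
Qed.

Lemma gp_witness_term a : a \in Delta f d ->
  ((`|fcoef f a| ^+ (2 * d) * selfpow a) / (D ^+ (2 * d) * monpow (gp_witness a) a))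
    `^ ((2 * d - mabs a)%N%:R)^-1
  = `|fcoef f a| * k ^+ mabs a * leadinvpow f d a `^ D^-1 / D.
Proof.
move=> aD; have k_gt0 := Delta_k_gt0 aD; have [fa_neq0 _] := mem_Delta aD.
have mabs_lt := Delta_mabs_lt _ aD.
set m := mabs a; set j := (2 * d - m)%N.
have j_gt0 : (0 < j)%N by rewrite subn_gt0.
have dmj : (2 * d = m + j)%N by rewrite subnKC // ltnW.
set Q := monpow (flead f d) a; set P := Q `^ D^-1.
have P_gt0 : 0 < P by rewrite powR_gt0 // monpow_gt0.
have leadinvpowE : leadinvpow f d a `^ D^-1 = P^-1.
  by rewrite /leadinvpow prodfV powR_inv // ltW // monpow_gt0.
have monpow_witness : monpow (gp_witness a) a
    = selfpow a * (`|fcoef f a| / (D * k ^+ j)) ^+ m * P ^+ j.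
  rewrite /gp_witness /= monpowM monpowM monpow_cst monpow_powR => [|i]; last exact: ltW.
  by rewrite -/m -/j -/Q [j%:R / D]mulrC powRrM powR_mulrn ?powR_ge0.
rewrite leadinvpowE monpow_witness -[RHS](powR_exprnK _ _ j_gt0); last first.
  by rewrite divr_ge0 ?(ltW D_gt0) // !mulr_ge0 ?invr_ge0 ?exprn_ge0 ?(ltW P_gt0) ?(ltW k_gt0).
congr (_ `^ _); rewrite dmj !exprMn !exprVn !exprMn !exprD -!exprM mulnC.
have S_gt0 : 0 < selfpow (R := R) a := selfpow_gt0 a.
by field; rewrite !expf_neq0 ?gt_eqF ?normr_gt0.
Qed.

Lemma gp_witness_slack :
  \sum_(a <- Delta f d | (mabs a < 2 * d)%N)
     (2 * d - mabs a)%N%:R *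
     ((`|fcoef f a| ^+ (2 * d) * selfpow a) / (D ^+ (2 * d) * monpow (gp_witness a) a))
       `^ ((2 * d - mabs a)%N%:R)^-1
  = fconst f - rL f d k.
Proof.
rewrite /rL opprB addrCA subrr addr0 mulr_sumr big_seq_cond [RHS]big_seq.
rewrite (eq_bigl (fun a => a \in Delta f d)) => [|a]; last exact/andb_idr/Delta_mabs_lt.
by apply: eq_bigr => a aD; rewrite gp_witness_term //; ring.
Qed.

Lemma rL_gp_feasible : gp_feasible f d (rL f d k).
Proof.
exists gp_witness; split; [|split; [|split]].
- by move=> a aD i; split; [exact: gp_witness_ge0 | exact: gp_witness_eq0].
- by move=> a /Delta_mabs_lt + mabs_eq; rewrite mabs_eq ltnn.
- exact: sum_gp_witness_le.
- by rewrite gp_witness_slack.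
Qed.

End GeometricProgramBound.

Theorem corollary4p1 (R : realType) (n d : nat) (f : mpoly.mpoly n R) (k : R) :
  (0 < d)%N ->
  msize f = (2 * d).+1 ->
  (forall a, a \in Delta f d -> (mabs a < 2 * d)%N) ->
  (forall i : 'I_n, 0 < flead f d i) ->
  (forall i : 'I_n, Croot (Cpoly f d i) <= k) ->
  ((rL f d k)%:E <= f_gp f d)%E.
Proof.
move=> d_gt0 _ Delta_mabs_lt flead_gt0 Croot_le_k.
apply: ereal_sup_ubound; exists (rL f d k) => //.
exact: rL_gp_feasible.
Qed.
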